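(* Let $n_y,n_z$ be odd positive integers with $2,n_y,n_z$ pairwise relatively prime, and let $K$ and $K'$ be Lissajous knots with frequencies $(2,n_y,n_z)$, $\phi_x=0$, and phase shift pairs $(\phi_y,\phi_z)$ and $(\phi_y',\phi_z')$ respectively. If $(\phi_y,\phi_z)$ and $(\phi_y',\phi_z')$ are symmetric with respect to the point $(\pi/4,\pi/4)$ or with respect to the point $(\pi/4,3\pi/4)$, then $K$ and $K'$ are equivalent (as knots, up to mirror image).
   Context: A Lissajous knot with frequencies $(n_x,n_y,n_z)$ and phase shifts $(\phi_x,\phi_y,\phi_z)$ is the curve $K(t)=(\cos(n_xt+\phi_x),\cos(n_yt+\phi_y),\cos(n_zt+\phi_z))$, $0\le t\le 2\pi$, when it is embedded. Knots and their mirror images are regarded as equivalent. Two points are symmetric with respect to a point $P$ if $P$ is their midpoint. *)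

From Stdlib Require Import Reals Lra Lia ZArith Znumtheory.
Open Scope R_scope.

Definition P3 := (R * R * R)%type.

(* Max-distance on R^3 (induces the Euclidean topology). *)
Definition dist3 (p q : P3) : R :=
  let '(x1, y1, z1) := p in let '(x2, y2, z2) := q in
  Rmax (Rabs (x1 - x2)) (Rmax (Rabs (y1 - y2)) (Rabs (z1 - z2))).

Definition cont3 (f : P3 -> P3) : Prop :=
  forall p eps, 0 < eps -> exists delta, 0 < delta /\
    forall q, dist3 p q < delta -> dist3 (f p) (f q) < eps.

Definition homeo3 (f : P3 -> P3) : Prop :=
  exists g : P3 -> P3, cont3 f /\ cont3 g /\
    (forall p, g (f p) = p) /\ (forall p, f (g p) = p).

Definition ambient_isotopy (H : R -> P3 -> P3) : Prop :=
  (forall t p eps, 0 <= t <= 1 -> 0 < eps -> exists delta, 0 < delta /\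
     forall s q, 0 <= s <= 1 -> Rabs (t - s) < delta -> dist3 p q < delta ->
       dist3 (H t p) (H s q) < eps) /\
  (forall t, 0 <= t <= 1 -> homeo3 (H t)) /\
  (forall p, H 0 p = p).

Definition image_curve (c : R -> P3) (p : P3) : Prop :=
  exists t, 0 <= t <= 2 * PI /\ c t = p.

Definition isotopic_sets (A B : P3 -> Prop) : Prop :=
  exists H, ambient_isotopy H /\
    (forall p, A p -> B (H 1 p)) /\ (forall q, B q -> exists p, A p /\ H 1 p = q).

Definition mirror (p : P3) : P3 := let '(x, y, z) := p in (x, y, - z).

Definition knot_equiv (c c' : R -> P3) : Prop :=
  isotopic_sets (image_curve c) (image_curve c') \/
  isotopic_sets (image_curve c) (image_curve (fun t => mirror (c' t))).

Definition lissajous (nx ny nz : nat) (px py pz : R) (t : R) : P3 :=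
  (cos (INR nx * t + px), cos (INR ny * t + py), cos (INR nz * t + pz)).

Definition embedded (c : R -> P3) : Prop :=
  forall s t, 0 <= s < 2 * PI -> 0 <= t < 2 * PI -> c s = c t -> s = t.

(* The half-turn about the z-axis is the endpoint of the isotopy of rotations,
   so a knot is equivalent to its image under it.  For
   K(t) = (cos 2t, cos(n_y t + phi_y), cos(n_z t + phi_z)) and c = pi/2 + j pi,
   the curve s |-> halfturn (K (c - s)) is, coordinatewise by
   cos(k pi - u) = (-1)^k cos u, the knot K' with phases
   (pi/2 - phi_y, pi/2 - phi_z + e pi) up to the sign of z, which the mirror
   image absorbs.  Since n_y is odd, j in {0,1} can be chosen to make the sign of
   the y-coordinate right. *)
From Stdlib Require Import Reals Lra Lia ZArith Znumtheory.
Open Scope R_scope.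

Lemma Rabs_sub_le_of_derive_le1 (f f' : R -> R) :
  (forall x, derivable_pt_lim f x (f' x)) -> (forall x, Rabs (f' x) <= 1) ->
  forall u v, Rabs (f u - f v) <= Rabs (u - v).
Proof.
  intros Hf Hf' u v.
  destruct (MVT_abs f f' v u (fun c _ => Hf c)) as [c [-> _]].
  pose proof (Rabs_pos (u - v)). pose proof (Hf' c). nra.
Qed.

Lemma Rabs_cos_le1 x : Rabs (cos x) <= 1.
Proof. apply Rabs_le; pose proof (COS_bound x); lra. Qed.

Lemma Rabs_sin_le1 x : Rabs (sin x) <= 1.
Proof. apply Rabs_le; pose proof (SIN_bound x); lra. Qed.

Lemma Rabs_cos_sub_le u v : Rabs (cos u - cos v) <= Rabs (u - v).
Proof.
  apply (Rabs_sub_le_of_derive_le1 cos (fun x => - sin x)).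
  - exact derivable_pt_lim_cos.
  - intros x; rewrite Rabs_Ropp; apply Rabs_sin_le1.
Qed.

Lemma Rabs_sin_sub_le u v : Rabs (sin u - sin v) <= Rabs (u - v).
Proof.
  apply (Rabs_sub_le_of_derive_le1 sin cos).
  - exact derivable_pt_lim_sin.
  - exact Rabs_cos_le1.
Qed.

Lemma Rabs_lin2_sub_le (c s c' s' x y x' y' k : R) :
  Rabs (c - c') <= k -> Rabs (s - s') <= k -> Rabs c' <= 1 -> Rabs s' <= 1 ->
  Rabs ((c * x + s * y) - (c' * x' + s' * y'))
    <= k * (Rabs x + Rabs y) + Rabs (x - x') + Rabs (y - y').
Proof.
  intros Hc Hs Hc' Hs'.
  replace ((c * x + s * y) - (c' * x' + s' * y'))
    with ((c - c') * x + (s - s') * y + c' * (x - x') + s' * (y - y')) by ring.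
  eapply Rle_trans; [apply Rabs_4|]. rewrite !Rabs_mult.
  pose proof (Rabs_pos x). pose proof (Rabs_pos y).
  pose proof (Rabs_pos (x - x')). pose proof (Rabs_pos (y - y')).
  pose proof (Rabs_pos (c - c')). pose proof (Rabs_pos (s - s')).
  pose proof (Rabs_pos c'). pose proof (Rabs_pos s'). nra.
Qed.

Definition rotz (theta : R) (p : P3) : P3 :=
  let '(x, y, z) := p in
  (cos theta * x - sin theta * y, sin theta * x + cos theta * y, z).

Definition halfturn (p : P3) : P3 := let '(x, y, z) := p in (- x, - y, z).

Lemma rotz_0 p : rotz 0 p = p.
Proof.
  destruct p as [[x y] z]; unfold rotz; rewrite cos_0, sin_0.
  f_equal; f_equal; ring.
Qed.

Lemma rotz_PI p : rotz PI p = halfturn p.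
Proof.
  destruct p as [[x y] z]; unfold rotz, halfturn; rewrite cos_PI, sin_PI.
  f_equal; f_equal; ring.
Qed.

Lemma rotzK theta p : rotz (- theta) (rotz theta p) = p.
Proof.
  destruct p as [[x y] z]; unfold rotz; rewrite cos_neg, sin_neg.
  pose proof (sin2_cos2 theta) as Hsc; unfold Rsqr in Hsc.
  f_equal; f_equal.
  - transitivity ((sin theta * sin theta + cos theta * cos theta) * x); [ring|].
    rewrite Hsc; ring.
  - transitivity ((sin theta * sin theta + cos theta * cos theta) * y); [ring|].
    rewrite Hsc; ring.
Qed.

Lemma rotz_joint_continuous a t p eps : 0 < eps -> exists delta, 0 < delta /\
  forall s q, Rabs (t - s) < delta -> dist3 p q < delta ->
    dist3 (rotz (a * t) p) (rotz (a * s) q) < eps.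
Proof.
  intros Heps; destruct p as [[x y] z].
  set (M := Rabs a * (Rabs x + Rabs y) + 2).
  assert (HM : 2 <= M).
  { pose proof (Rabs_pos a). pose proof (Rabs_pos x). pose proof (Rabs_pos y).
    unfold M; nra. }
  exists (eps / (M + 1)).
  assert (Hdelta : 0 < eps / (M + 1)) by (apply Rdiv_lt_0_compat; lra).
  assert (Heps_eq : eps / (M + 1) * (M + 1) = eps) by (field; lra).
  split; [exact Hdelta|].
  set (d := eps / (M + 1)) in *.
  intros s [[x' y'] z'] Hts Hq; unfold dist3, rotz in *.
  apply Rmax_Rlt in Hq as [Hx Hq]; apply Rmax_Rlt in Hq as [Hy Hz].
  assert (Hangle : Rabs (a * t - a * s) <= Rabs a * d).
  { replace (a * t - a * s) with (a * (t - s)) by ring; rewrite Rabs_mult.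
    apply Rmult_le_compat_l; [apply Rabs_pos | lra]. }
  assert (Hcos := Rle_trans _ _ _ (Rabs_cos_sub_le (a * t) (a * s)) Hangle).
  assert (Hsin := Rle_trans _ _ _ (Rabs_sin_sub_le (a * t) (a * s)) Hangle).
  assert (Hfin : Rabs a * d * (Rabs x + Rabs y) + d + d < eps).
  { replace (Rabs a * d * (Rabs x + Rabs y) + d + d) with (M * d) by (unfold M; ring).
    rewrite <- Heps_eq; nra. }
  assert (Hd_eps : d < eps) by (rewrite <- Heps_eq; nra).
  apply Rmax_lub_lt; [|apply Rmax_lub_lt]; [| |lra].
  - eapply Rle_lt_trans; [|exact Hfin].
    replace (cos (a * t) * x - sin (a * t) * y - (cos (a * s) * x' - sin (a * s) * y'))
      with ((cos (a * t) * x + - sin (a * t) * y)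
            - (cos (a * s) * x' + - sin (a * s) * y')) by ring.
    eapply Rle_trans; [apply Rabs_lin2_sub_le with (k := Rabs a * d)|lra].
    + exact Hcos.
    + replace (- sin (a * t) - - sin (a * s)) with (- (sin (a * t) - sin (a * s))) by ring.
      rewrite Rabs_Ropp; exact Hsin.
    + apply Rabs_cos_le1.
    + rewrite Rabs_Ropp; apply Rabs_sin_le1.
  - eapply Rle_lt_trans; [|exact Hfin].
    eapply Rle_trans; [apply Rabs_lin2_sub_le with (k := Rabs a * d)|lra];
      auto using Rabs_cos_le1, Rabs_sin_le1.
Qed.

Lemma cont3_rotz theta : cont3 (rotz theta).
Proof.
  intros p eps Heps.
  destruct (rotz_joint_continuous theta 1 p eps Heps) as [d [Hd H]].
  exists d; split; [exact Hd|]; intros q Hq.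
  specialize (H 1 q); rewrite Rmult_1_r in H; apply H; [|exact Hq].
  rewrite Rminus_diag, Rabs_R0; exact Hd.
Qed.

Lemma homeo3_rotz theta : homeo3 (rotz theta).
Proof.
  exists (rotz (- theta)); repeat split; try apply cont3_rotz.
  - apply rotzK.
  - intros p; rewrite <- (Ropp_involutive theta) at 1; apply rotzK.
Qed.

Lemma ambient_isotopy_rotz a : ambient_isotopy (fun t => rotz (a * t)).
Proof.
  split; [|split].
  - intros t p eps _ Heps.
    destruct (rotz_joint_continuous a t p eps Heps) as [d [Hd H]].
    exists d; split; [exact Hd|]; intros s q _; apply H.
  - intros t _; apply homeo3_rotz.
  - intros p; rewrite Rmult_0_r; apply rotz_0.
Qed.

Lemma image_curve_reflect (K : R -> P3) c p :
  (forall t, K (t + 2 * PI) = K t) -> 0 <= c <= 2 * PI ->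
  image_curve (fun s => K (c - s)) p <-> image_curve K p.
Proof.
  intros HK Hc; split; intros [t [Ht <-]].
  - destruct (Rle_lt_dec 0 (c - t)).
    + exists (c - t); split; [lra | reflexivity].
    + exists (c - t + 2 * PI); split; [lra | apply HK].
  - destruct (Rle_lt_dec 0 (c - t)).
    + exists (c - t); split; [lra|]; f_equal; ring.
    + exists (c - t + 2 * PI); split; [lra|].
      rewrite <- HK; f_equal; ring.
Qed.

Lemma isotopic_halfturn_reflect (K K' : R -> P3) c :
  (forall t, K (t + 2 * PI) = K t) -> 0 <= c <= 2 * PI ->
  (forall s, K' s = halfturn (K (c - s))) ->
  isotopic_sets (image_curve K) (image_curve K').
Proof.
  intros HK Hc HK'.
  exists (fun t => rotz (PI * t)); split; [apply ambient_isotopy_rotz|].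
  rewrite Rmult_1_r; split.
  - intros p Hp; apply (image_curve_reflect K c p HK Hc) in Hp as [s [Hs <-]].
    exists s; split; [exact Hs|]; rewrite HK', rotz_PI; reflexivity.
  - intros q [s [Hs <-]]; exists (K (c - s)); split.
    + apply (image_curve_reflect K c _ HK Hc); exists s; split; [exact Hs | reflexivity].
    + rewrite HK', rotz_PI; reflexivity.
Qed.

Definition zscale (sigma : R) (p : P3) : P3 := let '(x, y, z) := p in (x, y, sigma * z).

Lemma pow_m1_cases k : (-1) ^ k = 1 \/ (-1) ^ k = -1.
Proof.
  induction k as [|k [IH | IH]]; simpl; [left | right | left]; rewrite ?IH; ring.
Qed.

Lemma knot_equiv_of_halfturn (K K' : R -> P3) c k :
  (forall t, K (t + 2 * PI) = K t) -> 0 <= c <= 2 * PI ->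
  (forall s, halfturn (K (c - s)) = zscale ((-1) ^ k) (K' s)) ->
  knot_equiv K K'.
Proof.
  intros HK Hc HKK'.
  destruct (pow_m1_cases k) as [Hsign | Hsign]; rewrite Hsign in HKK'; [left | right];
    apply (isotopic_halfturn_reflect K _ c HK Hc); intros s; rewrite HKK';
    destruct (K' s) as [[x y] z]; unfold zscale, mirror; f_equal; ring.
Qed.

Lemma cos_nat_PI_sub k u : cos (INR k * PI - u) = (-1) ^ k * cos u.
Proof.
  induction k as [|k IH].
  - rewrite Rmult_0_l, Rminus_0_l, cos_neg; simpl; ring.
  - rewrite S_INR.
    replace ((INR k + 1) * PI - u) with ((INR k * PI - u) + PI) by ring.
    rewrite neg_cos, IH; simpl; ring.
Qed.

Lemma lissajous_periodic nx ny nz px py pz t :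
  lissajous nx ny nz px py pz (t + 2 * PI) = lissajous nx ny nz px py pz t.
Proof.
  unfold lissajous.
  assert (E : forall n q, cos (INR n * (t + 2 * PI) + q) = cos (INR n * t + q)).
  { intros n q; rewrite <- (cos_period (INR n * t + q) n); f_equal; ring. }
  rewrite !E; reflexivity.
Qed.

Lemma lissajous_halfturn_reflect (ny nz a b j e : nat) py pz s :
  ny = (2 * a + 1)%nat -> nz = (2 * b + 1)%nat -> Nat.Even (a + j * ny) ->
  halfturn (lissajous 2 ny nz 0 py pz (PI / 2 + INR j * PI - s))
  = zscale ((-1) ^ S (b + j * nz + e))
      (lissajous 2 ny nz 0 (PI / 2 - py) (PI / 2 - pz + INR e * PI) s).
Proof.
  intros Hny Hnz [m Hm].
  assert (Hny' : INR ny = 2 * INR a + 1)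
    by (rewrite Hny, plus_INR, mult_INR; simpl; ring).
  assert (Hnz' : INR nz = 2 * INR b + 1)
    by (rewrite Hnz, plus_INR, mult_INR; simpl; ring).
  unfold lissajous, halfturn, zscale; f_equal; [f_equal|].
  - replace (INR 2 * (PI / 2 + INR j * PI - s) + 0)
      with (INR (S (2 * j)) * PI - (INR 2 * s + 0))
      by (rewrite (S_INR (2 * j)), mult_INR; simpl; field).
    rewrite cos_nat_PI_sub, pow_1_odd; ring.
  - replace (INR ny * (PI / 2 + INR j * PI - s) + py)
      with (INR (S (a + j * ny)) * PI - (INR ny * s + (PI / 2 - py)))
      by (rewrite (S_INR (a + j * ny)), plus_INR, mult_INR, Hny'; field).
    rewrite cos_nat_PI_sub, Hm, pow_1_odd; ring.
  - replace (INR nz * (PI / 2 + INR j * PI - s) + pz)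
      with (INR (S (b + j * nz + e)) * PI - (INR nz * s + (PI / 2 - pz + INR e * PI)))
      by (rewrite (S_INR (b + j * nz + e)), !plus_INR, mult_INR, Hnz'; field).
    apply cos_nat_PI_sub.
Qed.

Theorem proposition2 (ny nz : nat) (py pz py' pz' : R) :
  (0 < ny)%nat -> (0 < nz)%nat -> Nat.odd ny = true -> Nat.odd nz = true ->
  Nat.gcd 2 ny = 1%nat -> Nat.gcd 2 nz = 1%nat -> Nat.gcd ny nz = 1%nat ->
  embedded (lissajous 2 ny nz 0 py pz) ->
  embedded (lissajous 2 ny nz 0 py' pz') ->
  ((py + py') / 2 = PI / 4 /\ (pz + pz') / 2 = PI / 4) \/
  ((py + py') / 2 = PI / 4 /\ (pz + pz') / 2 = 3 * PI / 4) ->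
  knot_equiv (lissajous 2 ny nz 0 py pz) (lissajous 2 ny nz 0 py' pz').
Proof.
  intros _ _ Hoy Hoz _ _ _ _ _ Hsym.
  apply Nat.odd_spec in Hoy as [a Hny]; apply Nat.odd_spec in Hoz as [b Hnz].
  assert (Hpy : py' = PI / 2 - py) by (destruct Hsym as [[H _] | [H _]]; lra).
  assert (Hpz : exists e : nat, pz' = PI / 2 - pz + INR e * PI).
  { destruct Hsym as [[_ H] | [_ H]]; [exists 0%nat | exists 1%nat]; simpl; lra. }
  destruct Hpz as [e Hpz].
  assert (Hj : exists j : nat, (j <= 1)%nat /\ Nat.Even (a + j * ny)).
  { destruct (Nat.Even_or_Odd a) as [[m Hm] | [m Hm]].
    - exists 0%nat; split; [lia | exists m; lia].
    - exists 1%nat; split; [lia | exists (3 * m + 2)%nat; lia]. }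
  destruct Hj as [j [Hj1 Hj]].
  assert (Hc : 0 <= PI / 2 + INR j * PI <= 2 * PI).
  { apply le_INR in Hj1; simpl in Hj1.
    pose proof (pos_INR j); pose proof PI_RGT_0; nra. }
  apply (knot_equiv_of_halfturn _ _ _ (S (b + j * nz + e)) (lissajous_periodic _ _ _ _ _ _) Hc).
  intros s; subst py' pz'; apply (lissajous_halfturn_reflect ny nz a b j e); assumption.
Qed.
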